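(* Let $0<a\le 1$. For every $\epsilon>0$ there is $c_1\in(\tfrac12,1)$ such that, for the two-phase marking scheme with parameter $c_1$ run alongside the biased random transpositions walk on $N$ cards, the first time $T_N$ at which all $N$ cards are marked satisfies $$P\Big(T_N>(1+\epsilon)\frac{1}{2a}N\log N\Big)=o(1)\quad\text{as }N\to\infty .$$
   Context: Biased random transpositions walk: $N=2n$ cards; $n$ are $a$-cards with weight $p(c)=a$ and $n$ are $b$-cards with weight $p(c)=b$, where $0<a\le1$, $b=2-a$. At each step $t$ two cards $R_t,L_t$ are chosen independently, each equal to card $c$ with probability $p(c)/N$, and their positions are exchanged (nothing if $R_t=L_t$). Two-phase marking scheme with parameter $c_1\in(\tfrac12,1)$, using auxiliary independent randomness; initially no card is marked; let $k$ be the number of marked cards at the start of step $t$. Phase 1 ($k<c_1N$): if $R_t$ and $L_t$ are both unmarked, mark $R_t$ with probability $\frac{a^2}{p(R_t)p(L_t)}$; otherwise do nothing. Phase 2 ($c_1N\le k<N$): assign to each unmarked card $u$ an ordered pair $(r(u),\ell(u))$ of marked cards such that $u\mapsto(r(u),\ell(u))$ is injective and at least one of $r(u),\ell(u)$ has the same type as $u$ (possible since $c_1>1/2$). Then: (1) if $R_t=L_t=u$ is unmarked, mark $u$ with probability $a/p(u)$; (2) if $R_t=u$ is unmarked and $L_t$ is marked, with probability $a/p(L_t)$ mark $u$, and otherwise move the mark from $L_t$ to $u$ (so $L_t$ becomes unmarked and $u$ marked); (3) symmetrically if $L_t=u$ is unmarked and $R_t$ marked, with probability $a/p(R_t)$ mark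 $u$, otherwise move the mark from $R_t$ to $u$; (4) if $(R_t,L_t)=(r(u),\ell(u))$ for an unmarked $u$, mark $u$ with probability $\frac{a\,p(u)}{p(R_t)p(L_t)}$; otherwise do nothing. The scheme ends when all cards are marked; $T_k$ is the first time $k$ cards are marked. *)

From mathcomp Require Import all_boot.
From Stdlib Require Import Reals.
Set Implicit Arguments. Unset Strict Implicit. Unset Printing Implicit Defensive.

(* Cards are 'I_(2*n): card i is an a-card iff i < n, otherwise a b-card. *)
Definition card_t (n : nat) := 'I_(2 * n).

Definition wt (n : nat) (a : R) (i : card_t n) : R :=
  if (i < n)%N then a else (2 - a)%R.

Definition same_type (n : nat) (i j : card_t n) : bool := (i < n)%N == (j < n)%N.

Definition ind (b : bool) : R := if b then 1%R else 0%R.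

(* An assignment rule for phase 2: given the current marked set S and an
   unmarked card u, the ordered pair (r(u), l(u)). *)
Definition assignment (n : nat) := {set card_t n} -> card_t n -> card_t n * card_t n.

Definition valid_assignment (n : nat) (c1 : R) (asg : assignment n) : Prop :=
  forall S : {set card_t n},
    (c1 * INR (2 * n) <= INR #|S|)%R -> (#|S| < 2 * n)%N ->
    (forall u v, u \notin S -> v \notin S -> asg S u = asg S v -> u = v) /\
    (forall u, u \notin S ->
        (asg S u).1 \in S /\ (asg S u).2 \in S /\
        (same_type u (asg S u).1 || same_type u (asg S u).2)).

Definition phase1_trans (n : nat) (a : R) (S : {set card_t n}) (r l : card_t n)
    (S' : {set card_t n}) : R :=
  if (r \notin S) && (l \notin S) then
    let q := (a * a / (wt a r * wt a l))%R in
    (q * ind (S' == r |: S) + (1 - q) * ind (S' == S))%R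
  else ind (S' == S).

Definition phase2_trans (n : nat) (a : R) (g : card_t n -> card_t n * card_t n)
    (S : {set card_t n}) (r l : card_t n) (S' : {set card_t n}) : R :=
  if (r \notin S) && (r == l) then
    let q := (a / wt a r)%R in
    (q * ind (S' == r |: S) + (1 - q) * ind (S' == S))%R
  else if (r \notin S) && (l \in S) then
    let q := (a / wt a l)%R in
    (q * ind (S' == r |: S) + (1 - q) * ind (S' == r |: (S :\ l)))%R
  else if (l \notin S) && (r \in S) then
    let q := (a / wt a r)%R in
    (q * ind (S' == l |: S) + (1 - q) * ind (S' == l |: (S :\ r)))%R
  else if (r \in S) && (l \in S) then
    match [pick u | (u \notin S) && (g u == (r, l))] with
    | Some u =>
        let q := (a * wt a u / (wt a r * wt a l))%R in
        (q * ind (S' == u |: S) + (1 - q) * ind (S' == S))%R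
    | None => ind (S' == S)
    end
  else ind (S' == S).

Definition mark_trans (n : nat) (a c1 : R) (asg : assignment n)
    (S : {set card_t n}) (r l : card_t n) (S' : {set card_t n}) : R :=
  if #|S| == 2 * n then ind (S' == S)
  else if Rlt_dec (INR #|S|) (c1 * INR (2 * n)) then phase1_trans a S r l S'
  else phase2_trans a (asg S) S r l S'.

(* One step of the law of the marked set: R_t, L_t independent, P(R_t = c) = p(c)/N. *)
Definition mark_step (n : nat) (a c1 : R) (asg : assignment n)
    (mu : {set card_t n} -> R) (S' : {set card_t n}) : R :=
  \big[Rplus/0%R]_(S : {set card_t n})
   \big[Rplus/0%R]_(r : card_t n)
    \big[Rplus/0%R]_(l : card_t n)
      (mu S * (wt a r / INR (2 * n)) * (wt a l / INR (2 * n))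
         * mark_trans a c1 asg S r l S')%R.

Fixpoint mark_law (n : nat) (a c1 : R) (asg : assignment n) (t : nat)
    : {set card_t n} -> R :=
  match t with
  | 0 => fun S => ind (S == set0)
  | t'.+1 => mark_step a c1 asg (mark_law a c1 asg t')
  end.

(* P(T_N > t) for integer t: not all cards marked after t steps. *)
Definition prob_not_done (n : nat) (a c1 : R) (asg : assignment n) (t : nat) : R :=
  \big[Rplus/0%R]_(S : {set card_t n} | S != setT) mark_law a c1 asg t S.

(* P(T_N > x) for real x >= 0 equals P(T_N > floor x). *)
Definition prob_T_gt (n : nat) (a c1 : R) (asg : assignment n) (x : R) : R :=
  prob_not_done a c1 asg (Z.to_nat (Int_part x)).

(* A drift argument. Write N = 2n, k for the number of marked cards and
   lam = 2a(1 - delta)/N. We build a potential Psi of the marked set which is at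
   least 1 until every card is marked and whose expectation contracts by the factor
   1 - lam at every step, so that
     P(T_N > t) <= E Psi(S_t) <= (1 - lam)^t Psi(set0) <= exp(-lam t) w N e^C,
   which is O(N^(-eps/2)) at t = (1 + eps) N log N / (2a).
   In phase 1, Psi = w N rho^(N - k) with rho = 1 + C/N: some card gets marked with
   probability at least (1 - c1)^2 a^2, which beats lam once C is large.
   In phase 2, Psi counts the unmarked cards, a-cards with weight w. An unmarked
   card u is drawn together with a marked card at rate about 2 p(u) k / N^2; for an
   a-card this is only 2ak/N^2, but against a marked b-card the mark moves onto u
   with probability (2 - 2a)/(2 - a) and Psi still drops by w - 1. For c1 close to 1
   and w large every unmarked card thus contributes lam/2 times its weight to the
   expected decrease. *)

From HB Require Import structures.
From mathcomp Require Import all_boot.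
From Stdlib Require Import Reals Lra Lia.
Set Implicit Arguments. Unset Strict Implicit. Unset Printing Implicit Defensive.
Open Scope R_scope.

HB.instance Definition _ :=
  Monoid.isComLaw.Build R 0 Rplus (fun x y z => esym (Rplus_assoc x y z)) Rplus_comm Rplus_0_l.
HB.instance Definition _ := Monoid.isMulLaw.Build R 0 Rmult Rmult_0_l Rmult_0_r.
HB.instance Definition _ :=
  Monoid.isAddLaw.Build R Rmult Rplus Rmult_plus_distr_r Rmult_plus_distr_l.

Section RealSums.
Variable T : finType.

Lemma sumR_le (F G : T -> R) :
  (forall i, F i <= G i) -> \big[Rplus/0]_(i : T) F i <= \big[Rplus/0]_(i : T) G i.
Proof. by move=> FG; apply: (big_ind2 (fun x y => x <= y)) => //; [lra | move=> *; lra]. Qed.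

Lemma sumR_ge0 (F : T -> R) : (forall i, 0 <= F i) -> 0 <= \big[Rplus/0]_(i : T) F i.
Proof. by move=> F0; apply: (big_ind (fun x => 0 <= x)) => //; [lra | move=> *; lra]. Qed.

Lemma sumR_ind_eq (X : T) (f : T -> R) : \big[Rplus/0]_(S : T) (ind (S == X) * f S) = f X.
Proof.
rewrite (bigD1 X) //= eqxx big1 /ind /=; first lra.
by move=> i /negbTE ->; lra.
Qed.

Lemma sumR_ind_mix (X Y : T) (f : T -> R) q q' :
  \big[Rplus/0]_(S : T) ((q * ind (S == X) + q' * ind (S == Y)) * f S) = q * f X + q' * f Y.
Proof.
rewrite (eq_bigr (fun S => q * (ind (S == X) * f S) + q' * (ind (S == Y) * f S))).
  by rewrite big_split /= -!big_distrr /= !sumR_ind_eq.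
by move=> S _; ring.
Qed.

Lemma sumR_ind_card (A : {pred T}) : \big[Rplus/0]_(i : T) ind (i \in A) = INR #|A|.
Proof.
rewrite -big_mkcond /= big_const.
by elim: #|A| => [//|k IH]; rewrite iterS IH S_INR; lra.
Qed.

Lemma sumR_one : \big[Rplus/0]_(i : T) 1 = INR #|T|.
Proof. by rewrite (eq_bigr (fun i => ind (i \in T))) // sumR_ind_card. Qed.

End RealSums.

Lemma ind_ge0 b : 0 <= ind b. Proof. by rewrite /ind; case: b; lra. Qed.

Lemma ind_mul_le b x y : 0 <= x -> x <= y -> ind b * x <= y.
Proof. by rewrite /ind; case: b; lra. Qed.

Lemma ind_mul_half_le b x y : x / 2 <= y -> ind b * x <= 2 * (ind b * y).
Proof. by rewrite /ind; case: b; lra. Qed.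

Section Cards.
Variable n : nat.
Local Notation N := (INR (2 * n)).

Lemma card_a_cards : #|[pred l : card_t n | (l < n)%nat]| = n.
Proof.
rewrite -sum1_card (big_mkcond (fun i => i \in _)) /=.
rewrite -(big_mkord xpredT (fun i => if (i < n)%nat then 1%nat else 0%nat)).
rewrite (big_cat_nat _ (n := n)) /=; [|by []|by rewrite leq_pmull].
rewrite [X in (_ + X)%nat]big1_seq; last first.
  by move=> i /andP[_]; rewrite mem_index_iota => /andP[ni _]; rewrite ltnNge ni.
rewrite addn0 big_nat_cond (eq_bigr (fun _ => 1%nat)); last by move=> i /andP[/andP[_ ->]].
by rewrite -big_nat_cond sum_nat_const_nat muln1 subn0.
Qed.

Lemma sum_ind_a_card : \big[Rplus/0]_(l : card_t n) ind (l < n)%nat = INR n.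
Proof.
rewrite (eq_bigr (fun l => ind (l \in [pred l : card_t n | (l < n)%nat]))) //.
by rewrite sumR_ind_card card_a_cards.
Qed.

Lemma sum_ind_in (S : {set card_t n}) :
  \big[Rplus/0]_(l : card_t n) ind (l \in S) = INR #|S|.
Proof. exact: sumR_ind_card. Qed.

Lemma sum_ind_notin (S : {set card_t n}) :
  \big[Rplus/0]_(l : card_t n) ind (l \notin S) = N - INR #|S|.
Proof.
have notin_ind (l : card_t n) : ind (l \notin S) = 1 + (-1) * ind (l \in S).
  by rewrite /ind; case: (l \in S) => /=; lra.
rewrite (eq_bigr _ (fun l _ => notin_ind l)) big_split /= -big_distrr /=.
by rewrite sumR_one sum_ind_in card_ord /=; lra.
Qed.

Lemma sum_wt a : \big[Rplus/0]_(l : card_t n) wt a l = N.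
Proof.
have wt_ind (l : card_t n) : wt a l = (2 - a) + (2 * a - 2) * ind (l < n)%nat.
  by rewrite /wt /ind; case: (l < n)%nat => /=; lra.
rewrite (eq_bigr _ (fun l _ => wt_ind l)) big_split /= -big_distrr /= sum_ind_a_card.
rewrite (eq_bigr (fun l => (2 - a) * 1)); last by move=> l _; lra.
by rewrite -big_distrr /= sumR_one card_ord mult_INR /=; lra.
Qed.

Definition marked_b_cards (S : {set card_t n}) : R :=
  \big[Rplus/0]_(l : card_t n) (ind (l \in S) * ind (~~ (l < n)%nat)).

Lemma marked_b_cards_ge (S : {set card_t n}) : INR #|S| - INR n <= marked_b_cards S.
Proof.
suff : INR #|S| <= INR n + marked_b_cards S by lra.
rewrite -sum_ind_in -sum_ind_a_card /marked_b_cards -big_split /=.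
by apply: sumR_le => l; rewrite /ind; case: (l \in S); case: (l < n)%nat => /=; lra.
Qed.

End Cards.

Lemma wt_ge a n (i : card_t n) : a <= 1 -> a <= wt a i.
Proof. by rewrite /wt; case: (i < n)%nat; lra. Qed.

Lemma wt_same_type a n (u v : card_t n) : same_type u v -> wt a u = wt a v.
Proof. by rewrite /same_type /wt => /eqP ->. Qed.

Section OneStep.
Variables (n : nat) (a c1 : R) (asg : assignment n).
Local Notation N := (INR (2 * n)).
Local Notation set_t := {set card_t n}.

Definition pair_mean (F : card_t n -> card_t n -> R) : R :=
  \big[Rplus/0]_(r : card_t n) \big[Rplus/0]_(l : card_t n)
     (wt a r / N * (wt a l / N) * F r l).

Definition step_mean (Psi : set_t -> R) (S : set_t) (r l : card_t n) : R :=
  \big[Rplus/0]_(S' : set_t) (mark_trans a c1 asg S r l S' * Psi S').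

Definition expect (mu Psi : set_t -> R) : R := \big[Rplus/0]_(S : set_t) (mu S * Psi S).

Lemma expect_mark_step (mu Psi : set_t -> R) :
  expect (mark_step a c1 asg mu) Psi = expect mu (fun S => pair_mean (step_mean Psi S)).
Proof.
rewrite /expect /mark_step /pair_mean /step_mean.
under eq_bigr => S' _ do rewrite big_distrl /=.
rewrite exchange_big /=; apply: eq_bigr => S _; rewrite big_distrr /=.
under eq_bigr => S' _ do rewrite big_distrl /=.
rewrite exchange_big /=; apply: eq_bigr => r _; rewrite big_distrr /=.
under eq_bigr => S' _ do rewrite big_distrl /=.
rewrite exchange_big /=; apply: eq_bigr => l _; rewrite !big_distrr /=.
by apply: eq_bigr => S' _; ring.
Qed.

Lemma pair_mean_add (F G : card_t n -> card_t n -> R) :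
  pair_mean (fun r l => F r l + G r l) = pair_mean F + pair_mean G.
Proof.
rewrite /pair_mean -big_split; apply: eq_bigr => r _.
by rewrite -big_split; apply: eq_bigr => l _; apply: Rmult_plus_distr_l.
Qed.

Lemma pair_mean_swap (F : card_t n -> card_t n -> R) :
  pair_mean (fun r l => F l r) = pair_mean F.
Proof.
by rewrite /pair_mean exchange_big; apply: eq_bigr => r _; apply: eq_bigr => l _; ring.
Qed.

Lemma N_gt0 : (0 < n)%nat -> 0 < N.
Proof. by move=> n_gt0; apply: lt_0_INR; apply/ltP; rewrite muln_gt0. Qed.

Hypotheses (a_gt0 : 0 < a) (a_le1 : a <= 1).

Lemma wt_div_ge0 (l : card_t n) : 0 <= wt a l / N.
Proof.
have := wt_ge l a_le1; have := pos_INR (2 * n).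
case/Rle_lt_or_eq_dec => [N0 wl | <- _]; last by rewrite Rdiv_0_r; lra.
by apply: Rmult_le_pos; [lra | apply/Rlt_le/Rinv_0_lt_compat].
Qed.

Lemma pair_mean_le_sub (F D : card_t n -> card_t n -> R) K : (0 < n)%nat ->
  (forall r l, F r l <= K - D r l) -> pair_mean F <= K - pair_mean D.
Proof.
move=> n_gt0 FD.
have sum_prob : \big[Rplus/0]_(l : card_t n) (wt a l / N) = 1.
  by rewrite -big_distrl /= sum_wt; field; have := N_gt0 n_gt0; lra.
suff : pair_mean F + pair_mean D <= K by lra.
rewrite /pair_mean -big_split /=.
rewrite -[K]Rmult_1_r -{1}sum_prob big_distrr /=; apply: sumR_le => r.
rewrite -big_split /= -[K * _]Rmult_1_r -{1}sum_prob !big_distrr /=; apply: sumR_le => l.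
have p_ge0 := Rmult_le_pos _ _ (wt_div_ge0 r) (wt_div_ge0 l).
have := Rmult_le_compat_l _ _ _ p_ge0 (FD r l); lra.
Qed.

Lemma mix_ge0 q b1 b2 : 0 <= q <= 1 -> 0 <= q * ind b1 + (1 - q) * ind b2.
Proof. by move=> q01; have := ind_ge0 b1; have := ind_ge0 b2; nra. Qed.

Lemma ratio_in01 x y : 0 <= x -> x <= y -> 0 < y -> 0 <= x / y <= 1.
Proof.
move=> x0 xy y0; split; first by apply: Rmult_le_pos; [lra | apply/Rlt_le/Rinv_0_lt_compat].
by apply: (Rmult_le_reg_r y) => //; rewrite /Rdiv Rmult_assoc Rinv_l; lra.
Qed.

Hypothesis asg_valid : valid_assignment c1 asg.

Lemma mark_trans_ge0 S r l S' : 0 <= mark_trans a c1 asg S r l S'.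
Proof.
have wr := wt_ge r a_le1; have wl := wt_ge l a_le1.
rewrite /mark_trans; case: ifP => [_ | S_not_full]; first exact: ind_ge0.
case: Rlt_dec => phase1.
  rewrite /phase1_trans; case: ifP => _; last exact: ind_ge0.
  by apply/mix_ge0/ratio_in01; nra.
rewrite /phase2_trans.
do 3 (case: ifP => _; first by apply/mix_ge0/ratio_in01; nra).
case: ifP => _; last exact: ind_ge0.
case: pickP => [u /andP[uS /eqP gu] | _]; last exact: ind_ge0.
(* Validity gives [u] a partner of its own type, so the marking probability is <= 1. *)
have S_lt : (#|S| < 2 * n)%nat.
  by rewrite ltn_neqAle S_not_full /=; have := max_card S; rewrite card_ord.
have [_ /(_ u uS)[_ [_]]] := asg_valid (Rnot_lt_le _ _ phase1) S_lt.
rewrite gu /= => /orP[] /(wt_same_type a) wu;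
  by apply/mix_ge0/ratio_in01; have := wt_ge u a_le1; rewrite wu; nra.
Qed.

Lemma mark_law_ge0 t S : 0 <= mark_law a c1 asg t S.
Proof.
elim: t S => [|t IH] S /=; first exact: ind_ge0.
apply: sumR_ge0 => S0; apply: sumR_ge0 => r; apply: sumR_ge0 => l.
apply: Rmult_le_pos; last exact: mark_trans_ge0.
by apply: Rmult_le_pos; first apply: Rmult_le_pos; [exact: IH | exact: wt_div_ge0 ..].
Qed.

End OneStep.

Section Potential.
Variables (n : nat) (a c1 w C : R) (asg : assignment n).
Local Notation N := (INR (2 * n)).
Local Notation set_t := {set card_t n}.

Definition pot_wt (u : card_t n) : R := if (u < n)%nat then w else 1.

Definition unmarked_weight (S : set_t) : R :=
  \big[Rplus/0]_(u : card_t n) (ind (u \notin S) * pot_wt u).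

Definition rho : R := 1 + C / N.

Definition potential (S : set_t) : R :=
  if Rlt_dec (INR #|S|) (c1 * N) then w * N * rho ^ (2 * n - #|S|) else unmarked_weight S.

Hypothesis w_ge1 : 1 <= w.

Lemma pot_wt_ge1 u : 1 <= pot_wt u. Proof. by rewrite /pot_wt; case: (u < n)%nat; lra. Qed.
Lemma pot_wt_le u : pot_wt u <= w. Proof. by rewrite /pot_wt; case: (u < n)%nat; lra. Qed.

Lemma unmarked_weight_setU1 (r : card_t n) (S : set_t) :
  r \notin S -> unmarked_weight (r |: S) = unmarked_weight S - pot_wt r.
Proof.
move=> rS; suff : unmarked_weight (r |: S) + pot_wt r = unmarked_weight S by lra.
rewrite -(sumR_ind_eq r pot_wt) /unmarked_weight -big_split /=; apply: eq_bigr => u _.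
rewrite in_setU1 /ind; case: eqP => [-> | _] /=; rewrite ?rS /=.
  by rewrite Rmult_0_l Rplus_0_l.
by rewrite Rmult_0_l Rplus_0_r.
Qed.

Lemma unmarked_weight_setD1 (l : card_t n) (S : set_t) :
  l \in S -> unmarked_weight (S :\ l) = unmarked_weight S + pot_wt l.
Proof.
move=> lS; rewrite -(sumR_ind_eq l pot_wt) /unmarked_weight -big_split /=.
apply: eq_bigr => u _.
rewrite in_setD1 /ind; case: eqP => [-> | _] /=; rewrite ?lS /=.
  by rewrite Rmult_0_l Rplus_0_l.
by rewrite Rmult_0_l Rplus_0_r.
Qed.

Lemma unmarked_weight_ge0 S : 0 <= unmarked_weight S.
Proof.
by apply: sumR_ge0 => u; apply: Rmult_le_pos; [exact: ind_ge0 | have := pot_wt_ge1 u; lra].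
Qed.

Lemma unmarked_weight_le S : unmarked_weight S <= w * N.
Proof.
rewrite -(card_ord (2 * n)) -sumR_one big_distrr /=; apply: sumR_le => u.
by rewrite Rmult_1_r; apply: ind_mul_le; [have := pot_wt_ge1 u; lra | exact: pot_wt_le].
Qed.

Lemma unmarked_weight_ge1 S : S != setT -> 1 <= unmarked_weight S.
Proof.
case: (pickP (fun u => u \notin S)) => [u uS _ | all_in]; last first.
  by case/eqP; apply/setP => u; rewrite inE; move/negbFE: (all_in u).
rewrite /unmarked_weight (bigD1 u) //= uS /ind /=.
rewrite Rmult_1_l; apply: Rle_trans (pot_wt_ge1 u) _.
rewrite -{1}[pot_wt u]Rplus_0_r; apply: Rplus_le_compat_l.
apply: (big_ind (fun x => 0 <= x)) => [|x y|i _]; [lra | lra |].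
by apply: Rmult_le_pos; [exact: ind_ge0 | have := pot_wt_ge1 i; lra].
Qed.

Hypotheses (C_ge0 : 0 <= C) (n_gt0 : (0 < n)%nat) (c1_lt1 : c1 < 1).

Lemma N_ge1 : 1 <= N.
Proof. by apply: (le_INR 1); apply/leP; rewrite muln_gt0. Qed.

Lemma rho_ge1 : 1 <= rho.
Proof.
have : 0 <= C / N by apply: Rmult_le_pos; [| apply/Rlt_le/Rinv_0_lt_compat/N_gt0].
by rewrite /rho; lra.
Qed.

Lemma phase1_potential_ge1 k : 1 <= w * N * rho ^ k.
Proof.
have := pow_R1_Rle _ k rho_ge1; have := N_ge1 => N1 rho_k.
have : 1 <= w * N by nra.
nra.
Qed.

Lemma potential_ge0 S : 0 <= potential S.
Proof.
rewrite /potential; case: Rlt_dec => S_phase1; last exact: unmarked_weight_ge0.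
exact: Rle_trans Rle_0_1 (phase1_potential_ge1 _).
Qed.

Lemma potential_ge1 S : S != setT -> 1 <= potential S.
Proof.
rewrite /potential; case: Rlt_dec => S_phase1 S_not_full; last exact: unmarked_weight_ge1.
exact: phase1_potential_ge1.
Qed.

Lemma potential_phase2 (S X : set_t) : ~ INR #|S| < c1 * N -> (#|S| <= #|X|)%nat ->
  potential X = unmarked_weight X.
Proof.
move=> S_phase2 /leP/le_INR SX; rewrite /potential.
by case: Rlt_dec => // X_phase1; case: S_phase2; lra.
Qed.

Lemma potential_full (S : set_t) : #|S| = (2 * n)%nat -> potential S = 0.
Proof.
move=> S_full.
have S_setT : S = setT by apply/eqP; rewrite eqEcard subsetT cardsT card_ord S_full leqnn.
rewrite (@potential_phase2 S) //; last by rewrite S_full; have := N_gt0 n_gt0; nra.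
by rewrite /unmarked_weight big1 // => u _; rewrite S_setT inE /ind /=; lra.
Qed.

Lemma phase1_not_full (S : set_t) : INR #|S| < c1 * N -> (#|S| < 2 * n)%nat.
Proof.
move=> S_phase1; have := N_gt0 n_gt0 => N_pos.
have : INR #|S| < N by nra.
by move/INR_lt/ltP.
Qed.

(* Leaving phase 1 cannot increase the potential because [unmarked_weight <= w * N]. *)
Lemma potential_mark_phase1 (S : set_t) (r : card_t n) :
  INR #|S| < c1 * N -> r \notin S -> potential (r |: S) <= potential S * / rho.
Proof.
move=> S_phase1 rS.
have rho_pow : rho ^ (2 * n - #|S|) = rho * rho ^ (2 * n - #|r |: S|).
  by rewrite cardsU1 rS add1n -subnSK ?phase1_not_full.
have rho_pos := rho_ge1.
rewrite [potential S]/potential; case: Rlt_dec => [{}S_phase1 | /(_ S_phase1) []].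
have -> : w * N * rho ^ (2 * n - #|S|) * / rho = w * N * rho ^ (2 * n - #|r |: S|).
  by rewrite rho_pow; field; lra.
rewrite /potential; case: Rlt_dec => next_phase1; first exact: Rle_refl.
apply: Rle_trans (unmarked_weight_le _) _.
rewrite -{1}[w * N]Rmult_1_r; apply: Rmult_le_compat_l; last exact: pow_R1_Rle rho_ge1.
by have := N_ge1; nra.
Qed.

Hypotheses (a_gt0 : 0 < a) (a_le1 : a <= 1).

Lemma wt_ratio_ge0 x (u v : card_t n) : 0 <= x -> 0 <= x / (wt a u * wt a v).
Proof.
move=> x0; have := wt_ge u a_le1; have := wt_ge v a_le1 => *.
by apply: Rmult_le_pos => //; apply/Rlt_le/Rinv_0_lt_compat; nra.
Qed.

Lemma step_mean_phase1 (S : set_t) (r l : card_t n) : INR #|S| < c1 * N ->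
  step_mean a c1 asg potential S r l <= potential S
    - ind (r \notin S) * ind (l \notin S) * (a * a / (wt a r * wt a l))
      * (potential S * (1 - / rho)).
Proof.
move=> S_phase1.
have S_not_full : #|S| != (2 * n)%nat by rewrite neq_ltn phase1_not_full.
rewrite /step_mean /mark_trans (negbTE S_not_full).
case: Rlt_dec => [{}S_phase1 | /(_ S_phase1) []]; rewrite /phase1_trans.
case rS: (r \in S); case lS: (l \in S) => /=; try by rewrite sumR_ind_eq /ind /=; lra.
rewrite sumR_ind_mix /ind /=.
have := potential_mark_phase1 S_phase1 (negbT rS).
have := wt_ratio_ge0 r l (Rle_0_sqr a); rewrite /Rsqr.
set q := a * a / _; set P' := potential _; set P := potential S => q_ge0 P'_le.
have := Rmult_le_compat_l _ _ _ q_ge0 P'_le; lra.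
Qed.

(* Expected decrease of [unmarked_weight] when the unmarked [u] is drawn with the
   marked [v]: [u] becomes marked and, with probability [1 - a / wt a v], [v] unmarked. *)
Definition swap_gain (u v : card_t n) : R := pot_wt u - (1 - a / wt a v) * pot_wt v.

Definition marked_swap_gain (S : set_t) (r l : card_t n) : R :=
  ind (r \notin S) * ind (l \in S) * swap_gain r l.

Definition phase2_gain (S : set_t) (r l : card_t n) : R :=
  marked_swap_gain S r l + marked_swap_gain S l r.

Lemma step_mean_phase2 (S : set_t) (r l : card_t n) :
  ~ INR #|S| < c1 * N -> #|S| != (2 * n)%nat ->
  step_mean a c1 asg potential S r l <= unmarked_weight S - phase2_gain S r l.
Proof.
move=> S_phase2 S_not_full.
(* Rules (1) and (4) only mark cards: their contribution is dropped. *)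
have pot_big (X : set_t) : (#|S| <= #|X|)%nat -> potential X = unmarked_weight X.
  exact: potential_phase2.
have pot_S := pot_big S (leqnn _).
rewrite /step_mean /mark_trans (negbTE S_not_full).
case: Rlt_dec => [/S_phase2 [] | {}S_phase2].
rewrite /phase2_trans /phase2_gain /marked_swap_gain.
case rS: (r \in S); case lS: (l \in S) => /=.
- case: pickP => [u /andP[uS /eqP gu] | _] /=; last by rewrite sumR_ind_eq pot_S /ind /=; lra.
  rewrite sumR_ind_mix pot_S pot_big ?cardsU1 ?uS // unmarked_weight_setU1 // /ind /=.
  have : 0 <= a * wt a u / (wt a r * wt a l).
    by apply: wt_ratio_ge0; have := wt_ge u a_le1; nra.
  by have := pot_wt_ge1 u; nra.
- have rl : (r == l) = false by apply/eqP => rl; rewrite rl lS in rS.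
  rewrite sumR_ind_mix !pot_big ?cardsU1 ?lS //; last first.
    by rewrite in_setD1 lS andbF add1n (cardsD1 r S) rS.
  rewrite (unmarked_weight_setU1 (S := S :\ r)) ?in_setD1 ?lS ?andbF //.
  by rewrite unmarked_weight_setD1 // unmarked_weight_setU1 ?lS // /ind /= /swap_gain; lra.
- have rl : (r == l) = false by apply/eqP => rl; rewrite rl lS in rS.
  rewrite rl /= sumR_ind_mix !pot_big ?cardsU1 ?rS //; last first.
    by rewrite in_setD1 rS andbF add1n (cardsD1 l S) lS.
  rewrite (unmarked_weight_setU1 (S := S :\ l)) ?in_setD1 ?rS ?andbF //.
  by rewrite unmarked_weight_setD1 // unmarked_weight_setU1 ?rS // /ind /= /swap_gain; lra.
- case: (r == l) => /=; last by rewrite sumR_ind_eq pot_S /ind /=; lra.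
  rewrite sumR_ind_mix pot_S pot_big ?cardsU1 ?rS // unmarked_weight_setU1 ?rS // /ind /=.
  have q_ge0 : 0 <= a / wt a r.
    by apply: Rmult_le_pos; [lra | apply/Rlt_le/Rinv_0_lt_compat; have := wt_ge r a_le1; lra].
  by have := pot_wt_ge1 r; nra.
Qed.

Lemma pair_mean_unmarked_pairs (S : set_t) X :
  pair_mean a (fun r l => ind (r \notin S) * ind (l \notin S) * (a * a / (wt a r * wt a l)) * X)
  = \big[Rplus/0]_(r : card_t n) ind (r \notin S) *
    (\big[Rplus/0]_(l : card_t n) ind (l \notin S) * (a * a / (N * N) * X)).
Proof.
have N_pos := N_gt0 n_gt0.
rewrite /pair_mean big_distrl /=; apply: eq_bigr => r _.
rewrite !big_distrl big_distrr /=; apply: eq_bigr => l _.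
by have := wt_ge r a_le1; have := wt_ge l a_le1 => *; field; lra.
Qed.

Lemma phase1_contraction (S : set_t) lam : INR #|S| < c1 * N ->
  lam <= (1 - c1) ^ 2 * a ^ 2 * (1 - / rho) ->
  pair_mean a (step_mean a c1 asg potential S) <= (1 - lam) * potential S.
Proof.
move=> S_phase1 lam_le.
apply: Rle_trans (pair_mean_le_sub a_gt0 a_le1 n_gt0 (fun r l => step_mean_phase1 r l S_phase1)) _.
rewrite pair_mean_unmarked_pairs sum_ind_notin.
have N_pos := N_gt0 n_gt0; have P_ge0 := potential_ge0 S; have rho1 := rho_ge1.
have rho_inv : 0 <= 1 - / rho <= 1.
  have := Rinv_0_lt_compat rho (ltac:(lra)).
  by have := Rinv_le_contravar 1 rho Rlt_0_1 rho_ge1; rewrite Rinv_1; lra.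
have unmarked_frac : (1 - c1) * N <= N - INR #|S| by nra.
set P := potential S; set M := N - INR #|S| in unmarked_frac *.
suff : lam * P <= M * (M * (a * a / (N * N) * (P * (1 - / rho)))) by lra.
have -> : M * (M * (a * a / (N * N) * (P * (1 - / rho)))) = (M / N) ^ 2 * a ^ 2 * (1 - / rho) * P.
  by field; lra.
apply: Rmult_le_compat_r => //; apply: Rle_trans lam_le _.
apply: Rmult_le_compat_r; first lra.
apply: Rmult_le_compat_r; first nra.
apply: pow_incr; split; first lra.
by apply: (Rmult_le_reg_r N) => //; rewrite /Rdiv Rmult_assoc Rinv_l; lra.
Qed.

Lemma pair_mean_phase2_gain (S : set_t) :
  pair_mean a (phase2_gain S) = 2 * \big[Rplus/0]_(r : card_t n) (ind (r \notin S) *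
    (wt a r / N * \big[Rplus/0]_(l : card_t n) (ind (l \in S) * (wt a l / N * swap_gain r l)))).
Proof.
rewrite /phase2_gain pair_mean_add [X in _ + X]pair_mean_swap Rplus_diag /pair_mean; congr (2 * _).
apply: eq_bigr => r _; rewrite !big_distrr /=; apply: eq_bigr => l _.
by rewrite /marked_swap_gain /=; ring.
Qed.

Lemma sum_marked_swap_gain (S : set_t) (r : card_t n) :
  \big[Rplus/0]_(l : card_t n) (ind (l \in S) * (wt a l / N * swap_gain r l)) =
  (a * pot_wt r * INR #|S| + ind (r < n)%nat * ((2 - 2 * a) * (w - 1)) * marked_b_cards S) / N.
Proof.
have N_pos := N_gt0 n_gt0.
rewrite -sum_ind_in /marked_b_cards big_distrr big_distrr -big_split /Rdiv big_distrl /=.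
apply: eq_bigr => l _; rewrite /swap_gain /pot_wt /wt /ind.
by case: (l \in S); case: (r < n)%nat; case: (l < n)%nat => /=; field; lra.
Qed.

Lemma phase2_card_rate (S : set_t) (r : card_t n) ell : ~ INR #|S| < c1 * N ->
  ell * w <= 2 * a * (a * w * c1 + (2 - 2 * a) * (w - 1) * (c1 - / 2)) ->
  ell <= 2 * (2 - a) * a * c1 ->
  ell / N / 2 * pot_wt r <= wt a r / N *
    ((a * pot_wt r * INR #|S| + ind (r < n)%nat * ((2 - 2 * a) * (w - 1)) * marked_b_cards S) / N).
Proof.
move=> /Rnot_lt_le k_ge ell_a ell_b.
have N_pos := N_gt0 n_gt0.
have kb_ge : (c1 - / 2) * N <= marked_b_cards S.
  by apply: Rle_trans (marked_b_cards_ge S); move: k_ge; rewrite mult_INR /=; lra.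
move: (INR #|S|) (marked_b_cards S) k_ge kb_ge => k kb k_ge kb_ge.
suff : ell * pot_wt r * N <=
    2 * wt a r * (a * pot_wt r * k + ind (r < n)%nat * ((2 - 2 * a) * (w - 1)) * kb).
  move=> H; apply: (Rmult_le_reg_r (2 * N * N)); first nra.
  by rewrite -[X in _ <= X]Rmult_1_r; field_simplify; try lra.
have := Rmult_le_compat_r N _ _ (Rlt_le _ _ N_pos) ell_a.
have := Rmult_le_compat_r N _ _ (Rlt_le _ _ N_pos) ell_b.
have gain_ge0 : 0 <= a * ((2 - 2 * a) * (w - 1)) by apply: Rmult_le_pos; nra.
have := Rmult_le_compat_l _ _ _ gain_ge0 kb_ge.
have := Rmult_le_compat_l (a * a * w) _ _ (ltac:(nra)) k_ge.
have := Rmult_le_compat_l (a * (2 - a)) _ _ (ltac:(nra)) k_ge.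
rewrite /pot_wt /wt /ind; case: (r < n)%nat => /= *; lra.
Qed.

Lemma phase2_contraction (S : set_t) ell : ~ INR #|S| < c1 * N -> #|S| != (2 * n)%nat ->
  ell * w <= 2 * a * (a * w * c1 + (2 - 2 * a) * (w - 1) * (c1 - / 2)) ->
  ell <= 2 * (2 - a) * a * c1 ->
  pair_mean a (step_mean a c1 asg potential S) <= (1 - ell / N) * potential S.
Proof.
move=> S_phase2 S_not_full ell_a ell_b.
apply: Rle_trans (pair_mean_le_sub a_gt0 a_le1 n_gt0
  (fun r l => step_mean_phase2 r l S_phase2 S_not_full)) _.
rewrite (potential_phase2 S_phase2 (leqnn _)).
suff : ell / N * unmarked_weight S <= pair_mean a (phase2_gain S) by lra.
rewrite pair_mean_phase2_gain /unmarked_weight big_distrr big_distrr /=.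
apply: sumR_le => r; rewrite sum_marked_swap_gain.
rewrite Rmult_comm Rmult_assoc; apply: ind_mul_half_le.
apply: Rle_trans (phase2_card_rate r S_phase2 ell_a ell_b); apply: Req_le; field.
by have := N_gt0 n_gt0; lra.
Qed.

Lemma potential_contraction (S : set_t) ell :
  ell / N <= (1 - c1) ^ 2 * a ^ 2 * (1 - / rho) ->
  ell * w <= 2 * a * (a * w * c1 + (2 - 2 * a) * (w - 1) * (c1 - / 2)) ->
  ell <= 2 * (2 - a) * a * c1 ->
  pair_mean a (step_mean a c1 asg potential S) <= (1 - ell / N) * potential S.
Proof.
move=> ell_1 ell_a ell_b.
have [S_full | S_not_full] := eqVneq #|S| (2 * n)%nat.
  rewrite (potential_full S_full) Rmult_0_r; apply: Req_le.
  rewrite /pair_mean big1 // => r _; rewrite big1 // => l _.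
  by rewrite /step_mean /mark_trans S_full eqxx sumR_ind_eq (potential_full S_full) Rmult_0_r.
case: (Rlt_dec (INR #|S|) (c1 * N)) => [S_phase1 | S_phase2].
  exact: phase1_contraction.
exact: phase2_contraction.
Qed.

End Potential.

Lemma pow_le_exp x k : 0 <= 1 + x -> (1 + x) ^ k <= exp (INR k * x).
Proof.
move=> x_ge; elim: k => [|k IH]; first by rewrite /= Rmult_0_l exp_0; lra.
rewrite S_INR Rmult_plus_distr_r Rmult_1_l exp_plus /= Rmult_comm.
by apply: Rmult_le_compat => //; [exact: pow_le | exact: exp_ineq1_le].
Qed.

Section Decay.
Variables (n : nat) (a c1 w C ell : R) (asg : assignment n).
Local Notation N := (INR (2 * n)).
Hypotheses (n_gt0 : (0 < n)%nat) (a_gt0 : 0 < a) (a_le1 : a <= 1) (w_ge1 : 1 <= w) (C_ge0 : 0 <= C).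
Hypotheses (c1_lt1 : c1 < 1) (asg_valid : valid_assignment c1 asg).
Hypotheses (ell_1 : ell / N <= (1 - c1) ^ 2 * a ^ 2 * (1 - / rho n C))
  (ell_a : ell * w <= 2 * a * (a * w * c1 + (2 - 2 * a) * (w - 1) * (c1 - / 2)))
  (ell_b : ell <= 2 * (2 - a) * a * c1) (ell_le : ell / N <= 1).
Local Notation Psi := (@potential n c1 w C).

Lemma expect_potential_le t :
  expect (mark_law a c1 asg t) Psi <= (1 - ell / N) ^ t * Psi set0.
Proof.
elim: t => [|t IH]; first by rewrite /expect /= sumR_ind_eq Rmult_1_l; exact: Rle_refl.
rewrite /= expect_mark_step.
apply: (Rle_trans _ ((1 - ell / N) * expect (mark_law a c1 asg t) Psi)).
  rewrite /expect big_distrr /=; apply: sumR_le => S.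
  have := potential_contraction asg w_ge1 C_ge0 n_gt0 c1_lt1 a_gt0 a_le1 S ell_1 ell_a ell_b.
  by have := mark_law_ge0 a_gt0 a_le1 asg_valid t S; nra.
by rewrite Rmult_assoc; apply: Rmult_le_compat_l => //; lra.
Qed.

Lemma prob_not_done_le_expect t :
  prob_not_done a c1 asg t <= expect (mark_law a c1 asg t) Psi.
Proof.
rewrite /prob_not_done big_mkcond /=; apply: sumR_le => S.
have := mark_law_ge0 a_gt0 a_le1 asg_valid t S.
case: ifP => [S_not_full | _] mu_ge0; last by have := potential_ge0 c1 w_ge1 C_ge0 n_gt0 S; nra.
by have := potential_ge1 c1 w_ge1 C_ge0 n_gt0 S_not_full; nra.
Qed.

End Decay.

Lemma potential_set0_le n c1 w C : (0 < n)%nat -> 0 < c1 -> 0 <= w -> 0 <= C ->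
  @potential n c1 w C set0 <= w * INR (2 * n) * exp C.
Proof.
move=> n_gt0 c1_gt0 w_ge0 C_ge0; have N_pos := N_gt0 n_gt0.
rewrite /potential cards0 subn0; case: Rlt_dec => [phase1 | ]; last by rewrite /=; nra.
apply: Rmult_le_compat_l; first nra.
rewrite /rho; apply: Rle_trans (pow_le_exp (x := C / INR (2 * n)) (2 * n) _) _.
  suff : 0 <= C / INR (2 * n) by lra.
  by apply: Rmult_le_pos => //; apply/Rlt_le/Rinv_0_lt_compat.
by apply: Req_le; congr exp; field; lra.
Qed.

(* [delta] is chosen so that [(1 + eps) * (1 - delta eps) = 1 + eps / 2]. *)
Definition delta (eps : R) : R := eps / (2 * (1 + eps)).
Definition c1_of (eps : R) : R := 1 - delta eps / 4.
Definition w_of (eps : R) : R := 2 / delta eps.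
Definition C_of (a eps : R) : R := 4 / ((1 - c1_of eps) ^ 2 * a).
Definition ell_of (a eps : R) : R := 2 * a * (1 - delta eps).

Lemma delta_bounds eps : 0 < eps -> 0 < delta eps < / 2.
Proof.
move=> eps_gt0; rewrite /delta; split; first by apply: Rdiv_pos_pos; lra.
apply: (Rmult_lt_reg_r (2 * (1 + eps))); first lra.
by rewrite /Rdiv Rmult_assoc Rinv_l; lra.
Qed.

Section ChosenRates.
Variables (a eps : R).
Hypotheses (a_gt0 : 0 < a) (a_le1 : a <= 1) (eps_gt0 : 0 < eps).

Lemma C_of_gt0 : 0 < C_of a eps.
Proof.
have := delta_bounds eps_gt0; rewrite /C_of /c1_of => d_bnd.
by apply: Rdiv_pos_pos; [lra | apply: Rmult_lt_0_compat => //; apply: pow_lt; lra].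
Qed.

Lemma w_of_ge1 : 1 <= w_of eps.
Proof.
have := delta_bounds eps_gt0; rewrite /w_of => d_bnd.
by apply: (Rmult_le_reg_r (delta eps)); [lra | rewrite /Rdiv Rmult_assoc Rinv_l; lra].
Qed.

Lemma chosen_rate_phase1 N : 0 < N -> C_of a eps <= N ->
  ell_of a eps / N <= (1 - c1_of eps) ^ 2 * a ^ 2 * (1 - / (1 + C_of a eps / N)).
Proof.
move=> N_pos C_le; have := delta_bounds eps_gt0 => d_bnd; have C_pos := C_of_gt0.
have -> : (1 - c1_of eps) ^ 2 * a ^ 2 * (1 - / (1 + C_of a eps / N)) = 4 * a / (N + C_of a eps).
  rewrite /C_of; field; rewrite /c1_of; repeat split; try lra.
  suff : 0 < (delta eps / 4) ^ 2 * a * N by lra.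
  by apply: Rmult_lt_0_compat => //; apply: Rmult_lt_0_compat => //; apply: pow_lt; lra.
apply: (Rmult_le_reg_r (N * (N + C_of a eps))); first nra.
have -> : ell_of a eps / N * (N * (N + C_of a eps)) = ell_of a eps * (N + C_of a eps) by field; lra.
have -> : 4 * a / (N + C_of a eps) * (N * (N + C_of a eps)) = 4 * a * N by field; lra.
have : 0 <= a * delta eps * (N + C_of a eps) by apply: Rmult_le_pos; nra.
by rewrite /ell_of; nra.
Qed.

Lemma chosen_rate_phase2_a :
  ell_of a eps * w_of eps <= 2 * a * (a * w_of eps * c1_of eps
    + (2 - 2 * a) * (w_of eps - 1) * (c1_of eps - / 2)).
Proof.
have := delta_bounds eps_gt0; rewrite /ell_of /w_of /c1_of; set d := delta eps => d_bnd.
suff : 0 <= 2 * a * (1 + a / 2 - (1 - a) * (1 - d / 2)).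
  have e : 2 * a * (a * (2 / d) * (1 - d / 4) + (2 - 2 * a) * (2 / d - 1) * (1 - d / 4 - / 2))
    - 2 * a * (1 - d) * (2 / d) = 2 * a * (1 + a / 2 - (1 - a) * (1 - d / 2)) by field; lra.
  lra.
by apply: Rmult_le_pos; nra.
Qed.

Lemma chosen_rate_phase2_b : ell_of a eps <= 2 * (2 - a) * a * c1_of eps.
Proof. by have := delta_bounds eps_gt0; rewrite /ell_of /c1_of; nra. Qed.

End ChosenRates.

Lemma exp_le_exp x y : x <= y -> exp x <= exp y.
Proof. by case=> [/exp_increasing/Rlt_le | ->] //; exact: Rle_refl. Qed.

Lemma Int_part_to_nat_ge x : 0 <= x -> x - 1 <= INR (Z.to_nat (Int_part x)).
Proof.
move=> x_ge0; have [up_x down_x] := base_Int_part x.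
have part_ge0 : (0 <= Int_part x)%Z.
  suff : (-1 < Int_part x)%Z by lia.
  by apply: lt_IZR; lra.
by rewrite INR_IZR_INZ Znat.Z2Nat.id //; lra.
Qed.

Lemma prob_not_done_ge0 n a c1 (asg : assignment n) t :
  0 < a -> a <= 1 -> valid_assignment c1 asg -> 0 <= prob_not_done a c1 asg t.
Proof.
move=> a_gt0 a_le1 asg_valid; rewrite /prob_not_done big_mkcond /=.
by apply: sumR_ge0 => S; case: ifP => _; [exact: mark_law_ge0 | lra].
Qed.

Section ChosenBound.
Variables (n : nat) (a eps : R) (asg : assignment n).
Local Notation N := (INR (2 * n)).
Local Notation c1 := (c1_of eps).
Hypotheses (n_gt0 : (0 < n)%nat) (a_gt0 : 0 < a) (a_le1 : a <= 1) (eps_gt0 : 0 < eps).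
Hypotheses (asg_valid : valid_assignment c1 asg) (C_le : C_of a eps <= N).

Lemma N_ge2 : 2 <= N.
Proof. by rewrite mult_INR; have := le_INR 1 n (ltP n_gt0); rewrite /=; lra. Qed.

Lemma ell_of_div_N_bounds : 0 <= ell_of a eps / N <= 1.
Proof.
have := delta_bounds eps_gt0; have := N_ge2 => N2 d_bnd; split.
  by apply: Rmult_le_pos; [rewrite /ell_of; nra | apply/Rlt_le/Rinv_0_lt_compat; lra].
by apply: (Rmult_le_reg_r N); [lra | rewrite /Rdiv Rmult_assoc Rinv_l /ell_of; nra].
Qed.

Lemma prob_not_done_chosen t : prob_not_done a c1 asg t <=
  exp (INR t * - (ell_of a eps / N)) * (w_of eps * N * exp (C_of a eps)).
Proof.
have [ell_ge0 ell_le] := ell_of_div_N_bounds.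
have w1 := w_of_ge1 eps_gt0; have C_pos := C_of_gt0 a_gt0 eps_gt0.
apply: Rle_trans (prob_not_done_le_expect (C := C_of a eps) n_gt0 a_gt0 a_le1 w1
  (Rlt_le _ _ C_pos) asg_valid t) _.
have c1_lt1 : c1 < 1 by have := delta_bounds eps_gt0; rewrite /c1_of; lra.
apply: Rle_trans (expect_potential_le n_gt0 a_gt0 a_le1 w1 (Rlt_le _ _ C_pos) c1_lt1 asg_valid
  (chosen_rate_phase1 a_gt0 eps_gt0 (N_gt0 n_gt0) C_le)
  (chosen_rate_phase2_a a_gt0 a_le1 eps_gt0) (chosen_rate_phase2_b a_gt0 a_le1 eps_gt0) ell_le t) _.
apply: Rmult_le_compat.
- by apply: pow_le; lra.
- exact: potential_ge0 w1 (Rlt_le _ _ C_pos) n_gt0 _.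
- by rewrite -[1 - _]/(1 + - _); apply: pow_le_exp; lra.
- by apply: potential_set0_le => //; have := delta_bounds eps_gt0; rewrite /c1_of; lra.
Qed.

Lemma prob_T_gt_chosen :
  prob_T_gt a c1 asg ((1 + eps) * / (2 * a) * N * ln N) <=
  w_of eps * exp (C_of a eps + 1) * exp (- (eps / 2) * ln N).
Proof.
have N2 := N_ge2; have [ell_ge0 ell_le] := ell_of_div_N_bounds.
have ln_pos : 0 < ln N by rewrite -ln_1; apply: ln_increasing; lra.
set x := (1 + eps) * / (2 * a) * N * ln N.
have x_ge0 : 0 <= x.
  have := Rinv_0_lt_compat (2 * a) (ltac:(lra)).
  by rewrite /x => inv_pos; repeat apply: Rmult_le_pos; lra.
have rate_x : ell_of a eps / N * x = (1 + eps / 2) * ln N.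
  by rewrite /x /ell_of /delta; field; lra.
have t_ge := Int_part_to_nat_ge x_ge0.
rewrite /prob_T_gt -/x; apply: Rle_trans (prob_not_done_chosen _) _.
apply: Rle_trans (Rmult_le_compat_r _ _ _ _
  (exp_le_exp (y := - ((1 + eps / 2) * ln N) + 1) _)) _.
- by apply: Rmult_le_pos; [have := w_of_ge1 eps_gt0; nra | exact/Rlt_le/exp_pos].
- by have := Rmult_le_compat_l _ _ _ ell_ge0 t_ge; nra.
apply: Req_le; rewrite -[X in _ * (_ * X * _)](exp_ln N); last lra.
have -> : exp (- (eps / 2) * ln N) = exp (- ((1 + eps / 2) * ln N)) * exp (ln N).
  by rewrite -exp_plus; congr exp; ring.
by rewrite !exp_plus; ring.
Qed.

End ChosenBound.

Lemma Un_cv_power_decay (u : nat -> R) K c M : 0 < K -> 0 < c ->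
  (forall n, M <= INR (2 * n) -> 0 <= u n <= K * exp (- c * ln (INR (2 * n)))) ->
  Un_cv u 0.
Proof.
move=> K_pos c_pos u_bound e e_pos.
have [n0 n0_large] := INR_unbounded (Rmax M (exp (ln (K / e) / c))).
exists n0 => n n_ge; set N := INR (2 * n).
have N_large : Rmax M (exp (ln (K / e) / c)) < N.
  apply: Rlt_le_trans n0_large _; apply: le_INR; apply/leP.
  by apply: leq_trans (leq_pmull _ _); [apply/leP | ].
have [u_ge0 u_le] := u_bound n (Rlt_le _ _ (Rle_lt_trans _ _ _ (Rmax_l _ _) N_large)).
rewrite /R_dist Rminus_0_r Rabs_right; last lra.
apply: Rle_lt_trans u_le _.
have ln_large : ln (K / e) < c * ln N.
  have : ln (K / e) / c < ln N.
    rewrite -{1}(ln_exp (ln (K / e) / c)); apply: ln_increasing; first exact: exp_pos.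
    exact: Rle_lt_trans (Rmax_r _ _) N_large.
  by move=> h; apply: (Rmult_lt_reg_r (/ c)); [apply: Rinv_0_lt_compat | field_simplify]; lra.
have : exp (- c * ln N) < e / K.
  have -> : e / K = exp (- ln (K / e)).
    by rewrite exp_Ropp exp_ln; [field; lra | exact: Rdiv_pos_pos].
  by apply: exp_increasing; lra.
move=> h; have := Rmult_lt_compat_l K _ _ K_pos h.
by have -> : K * (e / K) = e by field; lra.
Qed.

Theorem mainTheorem7 :
  forall a : R, (0 < a)%R -> (a <= 1)%R ->
  forall eps : R, (0 < eps)%R ->
  exists c1 : R, (/2 < c1)%R /\ (c1 < 1)%R /\
    forall asg : forall n : nat, assignment n,
      (forall n : nat, valid_assignment c1 (asg n)) ->
      Un_cv (fun n : nat =>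
               prob_T_gt a c1 (asg n)
                 ((1 + eps) * / (2 * a) * INR (2 * n) * ln (INR (2 * n)))%R)
            0%R.
Proof.
move=> a a_gt0 a_le1 eps eps_gt0.
have d_bnd := delta_bounds eps_gt0.
exists (c1_of eps); split; [rewrite /c1_of; lra | split; [rewrite /c1_of; lra | ]].
move=> asg asg_valid.
have K_pos : 0 < w_of eps * exp (C_of a eps + 1).
  by apply: Rmult_lt_0_compat; [have := w_of_ge1 eps_gt0; lra | exact: exp_pos].
apply: (Un_cv_power_decay (M := Rmax 1 (C_of a eps)) K_pos (ltac:(lra) : 0 < eps / 2)).
move=> n M_le; have C_le := Rle_trans _ _ _ (Rmax_r _ _) M_le.
have n_gt0 : (0 < n)%nat.
  by case: n M_le {C_le} => [|n] //; have := Rmax_l 1 (C_of a eps); rewrite muln0 /=; lra.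
split; first exact: prob_not_done_ge0.
exact: prob_T_gt_chosen.
Qed.
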